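(* Let $\Omega\subseteq\mathbb{R}^n$ be open and convex, let $f:\Omega\to\mathbb{R}$ be convex and differentiable with $\nabla f$ Lipschitz continuous with constant $L$ (extend $f$ by $+\infty$ outside $\Omega$), let $g:\mathbb{R}^n\to\mathbb{R}\cup\{+\infty\}$ be convex with closed sublevel sets, and let $h=f+g$ have compact sublevel sets and $h^\star=\inf_x h(x)<\infty$. Run the oracle-structured minimization method (described in the context) from $x^0\in\Omega$, with parameters satisfying $\mu_{\max}\tau_{\min}>2L/(1-\alpha)$. Then $h(x^k)\to h^\star$ as $k\to\infty$.
   Context: Oracle-structured minimization method (OSMM). Fixed parameters: memory $M\ge1$ (integer), $\alpha,\beta\in(0,1)$, $\tau_{\min}>0$, $0<\mu_{\min}\le\mu_{\max}$, $\gamma_{\rm dec}\in(0,1)$, $\gamma_{\rm inc}>1$, and an initial $\mu_0\in[\mu_{\min},\mu_{\max}]$. There is a constant $C$ and, for each $k$, a symmetric positive semidefinite matrix $H_k$ with $\|H_k\|_2\le C$ (otherwise arbitrary). For $k=0,1,2,\dots$: (1) $l_k(x)=\max_{i=\max\{0,k-M+1\},\dots,k}\big(f(x^i)+\nabla f(x^i)^T(x-x^i)\big)$; $\tau_k=\operatorname{Tr}(H_k)/n$; $\lambda_k=\mu_k(\tau_k+\tau_{\min})$. (2) $x^{k+1/2}=\operatorname*{argmin}_x\big(l_k(x)+g(x)+\tfrac12(x-x^k)^T(H_k+\lambda_kI)(x-x^k)\big)$, $v^k=x^{k+1/2}-x^k$. (3) With $\phi_k(t)=f(x^k+tv^k)+t\,g(x^{k+1/2})+(1-t)g(x^k)$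 for $t\in[0,1]$, let $t_k=\beta^j$ where $j$ is the smallest nonnegative integer with $\phi_k(t_k)\le h(x^k)-\frac{\alpha t_k}{2}(v^k)^T(H_k+\lambda_kI)v^k$; set $x^{k+1}=x^k+t_kv^k$. (4) $\mu_{k+1}=\max\{\gamma_{\rm dec}\mu_k,\mu_{\min}\}$ if $t_k=1$, and $\mu_{k+1}=\min\{\gamma_{\rm inc}\mu_k,\mu_{\max}\}$ if $t_k<1$. *)

From HB Require Import structures.
From mathcomp Require Import all_boot all_order all_algebra.
From mathcomp Require Import all_classical all_reals all_analysis.
Set Implicit Arguments. Unset Strict Implicit. Unset Printing Implicit Defensive.
Import Order.TTheory GRing.Theory Num.Theory.
Import numFieldNormedType.Exports.
Local Open Scope classical_set_scope.
Local Open Scope ring_scope.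

Section OSMMDefs.
Variables (R : realType) (n : nat).
Notation vec := 'cV[R]_n.

Definition dotv (x y : vec) : R := (x^T *m y) 0 0.
Definition enorm (x : vec) : R := Num.sqrt (dotv x x).
Definition quadf (A : 'M[R]_n) (v : vec) : R := (v^T *m A *m v) 0 0.

Definition convex_set_v (S : set vec) : Prop :=
  forall (x y : vec) (t : R), S x -> S y -> 0 <= t <= 1 -> S (t *: x + (1 - t) *: y).

Definition convex_on (S : set vec) (f : vec -> R) : Prop :=
  forall (x y : vec) (t : R), S x -> S y -> 0 <= t <= 1 ->
    f (t *: x + (1 - t) *: y) <= t * f x + (1 - t) * f y.

Definition convex_ext (g : vec -> \bar R) : Prop :=
  forall (x y : vec) (t : R), 0 <= t <= 1 ->
    (g (t *: x + (1 - t) *: y)%R <= t%:E * g x + (1 - t)%R%:E * g y)%E.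

Definition fext (Omega : set vec) (f : vec -> R) (x : vec) : \bar R :=
  if x \in Omega then (f x)%:E else +oo%E.

Definition hfun (Omega : set vec) (f : vec -> R) (g : vec -> \bar R) (x : vec) : \bar R :=
  (fext Omega f x + g x)%E.

(* the piecewise-affine model l_k built on the last M iterates (indices max(0,k-M+1)..k) *)
Definition affmod (f : vec -> R) (gf : vec -> vec) (xs : nat -> vec) (i : nat) (z : vec) : R :=
  f (xs i) + dotv (gf (xs i)) (z - xs i).

Definition lmodel (M : nat) (f : vec -> R) (gf : vec -> vec) (xs : nat -> vec) (k : nat) (z : vec) : R :=
  \big[Num.max/affmod f gf xs k z]_(k.+1 - M <= i < k.+1) affmod f gf xs i z.

Definition osmm_tau (Hk : 'M[R]_n) : R := \tr Hk / n%:R.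
Definition osmm_lambda (muk tau_min : R) (Hk : 'M[R]_n) : R := muk * (osmm_tau Hk + tau_min).
Definition osmm_mat (muk tau_min : R) (Hk : 'M[R]_n) : 'M[R]_n :=
  Hk + (osmm_lambda muk tau_min Hk)%:M.

Definition osmm_obj (M : nat) (f : vec -> R) (gf : vec -> vec) (g : vec -> \bar R)
  (xs : nat -> vec) (Ak : 'M[R]_n) (k : nat) (z : vec) : \bar R :=
  ((lmodel M f gf xs k z)%:E + g z + (1 / 2 * quadf Ak (z - xs k))%:E)%E.

Definition osmm_phi (Omega : set vec) (f : vec -> R) (g : vec -> \bar R)
  (xk xhk : vec) (s : R) : \bar R :=
  (fext Omega f (xk + s *: (xhk - xk)) + s%:E * g xhk + (1 - s)%R%:E * g xk)%E.

Definition osmm_accept (Omega : set vec) (f : vec -> R) (g : vec -> \bar R) (alpha : R)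
  (Ak : 'M[R]_n) (xk xhk : vec) (s : R) : Prop :=
  (osmm_phi Omega f g xk xhk s <=
     hfun Omega f g xk - (alpha * s / 2 * quadf Ak (xhk - xk))%:E)%E.

End OSMMDefs.

(* The subproblem minimises a model of [h] that lies below it (by convexity [l_k <= f]) plus a
   quadratic term whose metric is bounded between [mu_min tau_min] and a constant, so its optimal
   value [m_k] satisfies [m_k <= h(x^k)].  The descent lemma bounds [phi_k(t)] by
   [h(x^k) - t (h(x^k) - m_k) + L t^2 |v^k|^2]; hence every step below a fixed threshold passes
   the Armijo test, backtracking gives [t_k >= t_min > 0], and combining the two bounds yields
   [h(x^k) - h(x^(k+1)) >= kappa t_min (h(x^k) - m_k)].  Comparing [x^(k+1/2)] with the points
   [x^k + s (y - x^k)] shows that the gap [h(x^k) - m_k] stays of order [s eps] as long as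
   [h(x^k) >= h(y) + eps], the iterates being bounded; so the monotone values [h(x^k)] cannot
   stay above [h(y) + eps] for any [y]. *)

From HB Require Import structures.
From mathcomp Require Import all_boot all_order all_algebra.
From mathcomp Require Import all_classical all_reals all_analysis.
From mathcomp Require Import ring lra.
Set Implicit Arguments. Unset Strict Implicit.
Import Order.TTheory GRing.Theory Num.Theory.
Import numFieldNormedType.Exports.
Local Open Scope classical_set_scope.
Local Open Scope ring_scope.

Section DotProduct.
Variables (R : realType) (n : nat).
Notation vec := 'cV[R]_n.
Implicit Types (u v w : vec) (A : 'M[R]_n).

Lemma dotvE u v : dotv u v = \sum_i u i 0 * v i 0.
Proof. by rewrite /dotv !mxE; apply: eq_bigr => i _; rewrite mxE. Qed.

Lemma dotvC u v : dotv u v = dotv v u.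
Proof. by rewrite !dotvE; apply: eq_bigr => i _; rewrite mulrC. Qed.

Lemma dotvDl u v w : dotv (u + v) w = dotv u w + dotv v w.
Proof. by rewrite !dotvE -big_split; apply: eq_bigr => i _; rewrite !mxE mulrDl. Qed.

Lemma dotvZl (s : R) u w : dotv (s *: u) w = s * dotv u w.
Proof. by rewrite !dotvE mulr_sumr; apply: eq_bigr => i _; rewrite !mxE mulrA. Qed.

Lemma dotvZr (s : R) u w : dotv w (s *: u) = s * dotv w u.
Proof. by rewrite dotvC dotvZl dotvC. Qed.

Lemma dotvNl u w : dotv (- u) w = - dotv u w.
Proof. by rewrite -scaleN1r dotvZl mulN1r. Qed.

Lemma dotvBl u v w : dotv (u - v) w = dotv u w - dotv v w.
Proof. by rewrite dotvDl dotvNl. Qed.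

Lemma dotv0l w : dotv 0 w = 0.
Proof. by rewrite -(scale0r (0 : vec)) dotvZl mul0r. Qed.

Lemma dotvv_ge0 u : 0 <= dotv u u.
Proof. by rewrite dotvE; apply: sumr_ge0 => i _; rewrite -expr2 sqr_ge0. Qed.

Lemma dotvv_comb (p q : R) u v :
  dotv (p *: u + q *: v) (p *: u + q *: v) =
  p ^+ 2 * dotv u u + 2 * p * q * dotv u v + q ^+ 2 * dotv v v.
Proof.
rewrite !dotvE !mulr_sumr -!big_split; apply: eq_bigr => i _; rewrite /= !mxE; ring.
Qed.

Lemma dotvvB_le u v : dotv (u - v) (u - v) <= 2 * dotv u u + 2 * dotv v v.
Proof.
have -> : u - v = 1 *: u + (-1) *: v by rewrite scale1r scaleN1r.
have := dotvv_ge0 (1 *: u + 1 *: v); rewrite !dotvv_comb; nra.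
Qed.

Lemma enorm_ge0 u : 0 <= enorm u.
Proof. exact: sqrtr_ge0. Qed.

Lemma enorm_sq u : enorm u ^+ 2 = dotv u u.
Proof. by rewrite /enorm sqr_sqrtr // dotvv_ge0. Qed.

Lemma enormN u : enorm (- u) = enorm u.
Proof. by rewrite /enorm dotvNl dotvC dotvNl opprK. Qed.

Lemma enormZ_le (s : R) u : 0 <= s <= 1 -> enorm (s *: u) <= enorm u.
Proof.
move=> /andP[s0 s1]; rewrite /enorm ler_sqrt ?dotvv_ge0 // dotvZl dotvZr.
have : s * s <= 1 by nra.
have := dotvv_ge0 u; nra.
Qed.

Lemma cauchy_schwarz u v : dotv u v <= enorm u * enorm v.
Proof.
set a := dotv u u; set b := dotv v v; set c := dotv u v.
have a0 : 0 <= a by apply: dotvv_ge0.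
have b0 : 0 <= b by apply: dotvv_ge0.
have [c_le0|c_gt0] := lerP c 0.
  by apply: le_trans c_le0 _; rewrite mulr_ge0 ?enorm_ge0.
suff c2_le : c ^+ 2 <= a * b.
  rewrite /enorm -/a -/b -sqrtrM // -(ger0_norm (ltW c_gt0)) -sqrtr_sqr.
  by rewrite ler_sqrt ?mulr_ge0.
have [b_eq0|b_neq0] := eqVneq b 0.
  (* with [v] isotropic, [u - s v] has squared norm [a - 2 s c], negative for large [s] *)
  have := dotvv_ge0 (1 *: u + (- ((a + 1) / c)) *: v).
  rewrite dotvv_comb -/a -/b -/c b_eq0.
  have -> : 2 * 1 * - ((a + 1) / c) * c = - 2 * (a + 1) by field; rewrite gt_eqF.
  lra.
have b_gt0 : 0 < b by rewrite lt_def b_neq0 b0.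
have := dotvv_ge0 (b *: u + (- c) *: v); rewrite dotvv_comb -/a -/b -/c => h.
by rewrite -subr_ge0 -(pmulr_rge0 _ b_gt0); nra.
Qed.

Lemma norm_dotv_le u v : `|dotv u v| <= enorm u * enorm v.
Proof.
rewrite ler_norml cauchy_schwarz andbT lerNl -dotvNl -(enormN u).
exact: cauchy_schwarz.
Qed.

Lemma quadfE A w : quadf A w = dotv w (A *m w).
Proof. by rewrite /quadf /dotv mulmxA. Qed.

Lemma quadf0 A : quadf A 0 = 0.
Proof. by rewrite quadfE dotv0l. Qed.

Lemma quadfZ A (s : R) w : quadf A (s *: w) = s ^+ 2 * quadf A w.
Proof. by rewrite !quadfE -scalemxAr dotvZl dotvZr mulrA expr2. Qed.

Lemma quadfD_scalar A (l : R) w : quadf (A + l%:M) w = quadf A w + l * dotv w w.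
Proof. by rewrite !quadfE mulmxDl mul_scalar_mx dotvC dotvDl dotvZl !(dotvC w). Qed.

Lemma quadf_le A (C : R) w :
  (forall v, enorm (A *m v) <= C * enorm v) -> quadf A w <= C * dotv w w.
Proof.
move=> A_le; rewrite quadfE; apply: le_trans (cauchy_schwarz _ _) _.
have := A_le w; have := enorm_ge0 w; have := enorm_ge0 (A *m w).
rewrite -enorm_sq; nra.
Qed.

Lemma quadf_delta A (i : 'I_n) : quadf A (delta_mx i 0) = A i i.
Proof. by rewrite /quadf trmx_delta -rowE -colE !mxE. Qed.

Lemma dotv_delta (i : 'I_n) : dotv (delta_mx i 0 : vec) (delta_mx i 0) = 1.
Proof. by rewrite /dotv trmx_delta mul_delta_mx mxE !eqxx. Qed.

Lemma osmm_tau_bounds A (C : R) :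
  (forall v, 0 <= quadf A v) -> (forall v, enorm (A *m v) <= C * enorm v) ->
  0 <= osmm_tau A <= `|C|.
Proof.
move=> A_psd A_le.
have diag_bounds i : 0 <= A i i <= `|C|.
  rewrite -quadf_delta A_psd /=; apply: le_trans (quadf_le _ A_le) _.
  by rewrite dotv_delta mulr1 ler_norm.
have tr_ge0 : 0 <= \tr A by apply: sumr_ge0 => i _; case/andP: (diag_bounds i).
have tr_le : \tr A <= n%:R * `|C|.
  rewrite mulr_natl -[n in _ *+ n]card_ord -sumr_const; apply: ler_sum => i _.
  by case/andP: (diag_bounds i).
rewrite /osmm_tau; have [n0|n_gt0] := posnP n.
  have -> : n%:R = 0 :> R by rewrite n0.
  by rewrite invr0 mulr0 lexx normr_ge0.
by rewrite divr_ge0 // ler_pdivrMr ?ltr0n // mulrC.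
Qed.

Lemma dotvv_le_norm w : dotv w w <= n%:R * `|w| ^+ 2.
Proof.
rewrite dotvE mulr_natl -[n in _ *+ n]card_ord -sumr_const.
apply: ler_sum => i _.
rewrite -expr2 -real_normK ?num_real //; apply: lerXn2r; rewrite ?nnegrE //.
by rewrite [`|w|]mx_normrE (bigD1 (i, 0)) //= le_max lexx.
Qed.

Lemma compact_dotvv_bounded (S : set vec) : compact S ->
  exists B, forall w, S w -> dotv w w <= B.
Proof.
move=> /compact_bounded [r [_ Sr]].
exists (n%:R * (`|r| + 1) ^+ 2) => w Sw; apply: le_trans (dotvv_le_norm w) _.
rewrite ler_wpM2l // lerXn2r ?nnegrE //.
by apply: Sr => //; rewrite (le_lt_trans (ler_norm r)) // ltrDl.
Qed.

End DotProduct.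

Lemma exists_small_step (R : realFieldType) (K e : R) :
  0 < e -> exists2 s : R, 0 < s <= 1 & s * K <= e.
Proof.
move=> e_gt0; have K1_gt0 : 0 < `|K| + 1 by rewrite ltr_pwDr.
set s := Num.min 1 (e / (`|K| + 1)).
have s_gt0 : 0 < s by rewrite lt_min ltr01 divr_gt0.
have s_le : s * (`|K| + 1) <= e by rewrite -ler_pdivlMr // ge_min lexx orbT.
exists s; first by rewrite s_gt0 ge_min lexx.
have := ler_wpM2l (ltW s_gt0) (ler_norm K); nra.
Qed.

Lemma ler_slack_mul (R : realFieldType) (a b K : R) :
  (forall s, 0 < s <= 1 -> a <= b + s * K) -> a <= b.
Proof.
move=> slack; apply/ler_addgt0Pr => e e_gt0.
have [s s01 sK] := exists_small_step K e_gt0.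
by apply: le_trans (slack s s01) _; rewrite lerD2l.
Qed.

Lemma add_scale_subE (R : ringType) (V : lmodType R) (s : R) (y w : V) :
  y + s *: (w - y) = s *: w + (1 - s) *: y.
Proof. by rewrite scalerBr scalerBl scale1r addrCA. Qed.

Section SmoothConvex.
Variables (R : realType) (n : nat).
Notation vec := 'cV[R]_n.
Variables (Omega : set vec) (f : vec -> R) (gf : vec -> vec) (L : R).
Hypotheses (Omega_convex : convex_set_v Omega)
  (f_diff : forall z, Omega z -> differentiable f z)
  (f_grad : forall z v, Omega z -> 'd f z v = dotv (gf z) v)
  (L_ge0 : 0 <= L)
  (gf_lipschitz : forall y z, Omega y -> Omega z -> enorm (gf y - gf z) <= L * enorm (y - z)).

Lemma convex_set_segment (x d : vec) (s : R) :
  Omega x -> Omega (x + d) -> 0 <= s <= 1 -> Omega (x + s *: d).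
Proof.
move=> Ox Oxd s01; have -> : x + s *: d = s *: (x + d) + (1 - s) *: x.
  by rewrite -add_scale_subE [x + d]addrC addrK.
exact: Omega_convex.
Qed.

Lemma mvt_segment (x d : vec) : Omega x -> Omega (x + d) ->
  exists2 c, 0 <= c <= 1 & f (x + d) - f x = dotv (gf (x + c *: d)) d.
Proof.
move=> Ox Oxd; pose phi s := f (x + s *: d).
have Oseg s : 0 <= s <= 1 -> Omega (x + s *: d) by exact: convex_set_segment.
have quotE s : (fun h : R => h^-1 *: ((phi \o shift s) (h *: 1) - phi s)) =
    (fun h : R => h^-1 *: ((f \o shift (x + s *: d)) (h *: d) - f (x + s *: d))).
  apply: funext => h /=; rewrite /phi /shift /=; congr (_ *: (f _ - _)).
  by rewrite [h *: 1]mulr1 scalerDl addrC -addrA (addrC _ x) addrA.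
have phi_derivable s : 0 <= s <= 1 -> derivable phi s 1.
  by move=> s01; rewrite /derivable quotE; apply/diff_derivable/f_diff/Oseg.
have phi_derive s : 0 <= s <= 1 -> 'D_1 phi s = dotv (gf (x + s *: d)) d.
  move=> s01; rewrite /derive quotE -/(derive f (x + s *: d) d) deriveE.
    exact/f_grad/Oseg.
  exact/f_diff/Oseg.
case: (@MVT_segment R phi (fun s => 'D_1 phi s) 0 1 ler01).
- move=> s; rewrite in_itv /= => /andP[s0 s1].
  by apply/derivableP/phi_derivable; rewrite !ltW.
- apply: derivable_within_continuous => s; rewrite in_itv /=.
  exact: phi_derivable.
move=> c; rewrite in_itv /= => c01.
rewrite /phi scale1r scale0r addr0 subr0 mulr1 phi_derive // => ->.
by exists c.
Qed.

Lemma descent_lemma (x d : vec) : Omega x -> Omega (x + d) ->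
  `|f (x + d) - f x - dotv (gf x) d| <= L * dotv d d.
Proof.
move=> Ox Oxd; have [c c01 ->] := mvt_segment Ox Oxd.
rewrite -dotvBl; apply: le_trans (norm_dotv_le _ _) _.
have gf_le : enorm (gf (x + c *: d) - gf x) <= L * enorm d.
  apply: le_trans (gf_lipschitz (convex_set_segment Ox Oxd c01) Ox) _.
  by rewrite addrC addKr ler_wpM2l // enormZ_le.
apply: le_trans (ler_wpM2r (enorm_ge0 _) gf_le) _.
by rewrite -mulrA -expr2 enorm_sq.
Qed.

Lemma convex_gradient_ineq (x z : vec) : convex_on Omega f -> Omega x -> Omega z ->
  f x + dotv (gf x) (z - x) <= f z.
Proof.
move=> f_convex Ox Oz; rewrite -lerBrDl.
apply: (@ler_slack_mul _ _ _ (L * dotv (z - x) (z - x))) => s /andP[s_gt0 s1].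
have s01 : 0 <= s <= 1 by rewrite ltW.
have Oxd : Omega (x + (z - x)) by rewrite addrC subrK.
have := descent_lemma Ox (convex_set_segment Ox Oxd s01).
rewrite dotvZl !dotvZr ler_norml => /andP[taylor_lo _].
have := f_convex z x s Oz Ox s01; rewrite -add_scale_subE => chord.
have := dotvv_ge0 (z - x).
(* [s D - s^2 L Q <= f (x + s (z - x)) - f x <= s (f z - f x)]; divide by [s] *)
set D := dotv (gf x) (z - x) in taylor_lo *; set Q := dotv (z - x) (z - x) in taylor_lo *.
move=> Q_ge0; have : s * D <= s * (f z - f x + s * (L * Q)) by nra.
by rewrite ler_pM2l.
Qed.

End SmoothConvex.

Lemma segment_clopen (R : realType) (T : topologicalType) (p : R -> T) (U S : set T) :
  continuous p -> open U -> closed S ->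
  (forall s, 0 <= s <= 1 -> U (p s) <-> S (p s)) -> U (p 0) -> U (p 1).
Proof.
move=> p_cont U_open S_closed US U0.
have connected01 : connected [set` `[(0 : R), 1]].
  exact/connected_intervalP/interval_is_interval.
suff : [set` `[0, 1]] `&` (p @^-1` U) = [set` `[0, 1]].
  move=> itv_sub_U; have [] // : ([set` `[0, 1]] `&` (p @^-1` U)) 1.
  by rewrite itv_sub_U /= in_itv /= lexx ler01.
apply: connected01.
- by exists 0; rewrite /= in_itv /= lexx ler01.
- by exists (p @^-1` U) => //; apply: open_comp => // s _; exact: p_cont.
- exists (p @^-1` S); first by apply: preimage_closed.
  apply/seteqP; split => s [s01 ps]; split => //;
    by apply/(US s) => //; rewrite /= in_itv in s01.
Qed.

Section EffectiveDomain.
Variables (R : realType) (n : nat).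
Notation vec := 'cV[R]_n.
Variables (Omega : set vec) (f : vec -> R) (g : vec -> \bar R).
Hypothesis g_nNy : forall z, g z != -oo%E.

Lemma fext_in z : Omega z -> fext Omega f z = (f z)%:E.
Proof. by move=> Oz; rewrite /fext mem_set. Qed.

Lemma fext_out z : ~ Omega z -> fext Omega f z = +oo%E.
Proof. by move=> Oz; rewrite /fext memNset. Qed.

Lemma fext_nNy z : fext Omega f z != -oo%E.
Proof. by rewrite /fext; case: ifP. Qed.

Lemma g_fin_num z : g z != +oo%E -> g z \is a fin_num.
Proof. by move=> gz; rewrite fin_numE g_nNy gz. Qed.

Lemma hfun_fin z : Omega z -> g z != +oo%E -> hfun Omega f g z = (f z + fine (g z))%:E.
Proof. by move=> Oz gz; rewrite /hfun fext_in // EFinD fineK // g_fin_num. Qed.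

Lemma hfun_out z : ~ Omega z -> hfun Omega f g z = +oo%E.
Proof. by move=> Oz; rewrite /hfun fext_out // addye. Qed.

Lemma hfun_fin_dom z : hfun Omega f g z != +oo%E -> Omega z /\ g z != +oo%E.
Proof.
move=> hz; have Oz : Omega z.
  by apply/not_notP => /hfun_out hz_eq; rewrite hz_eq eqxx in hz.
split => //; apply: contra hz => /eqP gz.
by rewrite /hfun gz addey ?fext_nNy.
Qed.

Variables (gf : vec -> vec) (L : R).
Hypotheses (Omega_convex : convex_set_v Omega)
  (f_diff : forall z, Omega z -> differentiable f z)
  (f_grad : forall z v, Omega z -> 'd f z v = dotv (gf z) v)
  (L_ge0 : 0 <= L)
  (gf_lipschitz : forall y z, Omega y -> Omega z -> enorm (gf y - gf z) <= L * enorm (y - z))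
  (g_convex : convex_ext g).

Lemma hfun_segment_bounded (y w : vec) : Omega y -> g y != +oo%E -> g w != +oo%E ->
  exists a, forall s, 0 <= s <= 1 -> Omega (y + s *: (w - y)) ->
    (hfun Omega f g (y + s *: (w - y)) <= a%:E)%E.
Proof.
move=> Oy gy gw; set d := w - y.
exists (f y + `|dotv (gf y) d| + L * dotv d d + `|fine (g y)| + `|fine (g w)|).
move=> s s01 Oys; have /andP[s_ge0 s_le1] := s01.
rewrite /hfun fext_in //.
have := descent_lemma Omega_convex f_diff f_grad L_ge0 gf_lipschitz Oy Oys.
rewrite dotvZr dotvZl dotvZr ler_norml => /andP[_ f_le].
have := g_convex w y s01; rewrite -add_scale_subE -(fineK (g_fin_num gy)).
rewrite -(fineK (g_fin_num gw)) -!EFinM -EFinD => g_le.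
apply: le_trans (leeD (lexx _) g_le) _; rewrite -EFinD lee_fin.
have lin_le : s * dotv (gf y) d <= `|dotv (gf y) d|.
  apply: le_trans (ler_norm _) _.
  by rewrite normrM ger0_norm // ler_piMl ?normr_ge0.
have quad_le : L * (s * (s * dotv d d)) <= L * dotv d d.
  apply: ler_wpM2l => //; have ss : 0 <= 1 - s * s by nra.
  have := mulr_ge0 ss (dotvv_ge0 d); nra.
have g_le' : s * fine (g w) + (1 - s) * fine (g y) <= `|fine (g y)| + `|fine (g w)|.
  have := ler_norm (fine (g w)); have := ler_norm (fine (g y)).
  have := ler_norm (- fine (g w)); have := ler_norm (- fine (g y)); rewrite !normrN.
  nra.
lra.
Qed.

(* On the segment from [y] to [w], membership in the open set [Omega] coincides with
   membership in a closed sublevel set of [h]; by connectedness it holds at [w]. *)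
Lemma dom_g_sub_Omega (y w : vec) : open Omega ->
  (forall a : R, closed [set z | (hfun Omega f g z <= a%:E)%E]) ->
  Omega y -> g y != +oo%E -> g w != +oo%E -> Omega w.
Proof.
move=> Omega_open h_closed Oy gy gw.
have [a h_le] := hfun_segment_bounded Oy gy gw.
pose p s := y + s *: (w - y).
have p_cont : continuous p.
  move=> s; exact: (continuousD (@cst_continuous _ _ y s) (@scalel_continuous _ _ (w - y) s)).
have : Omega (p 1).
  apply: (segment_clopen p_cont Omega_open (h_closed a)); last first.
    by rewrite /p scale0r addr0.
  move=> s s01; split; first exact: h_le.
  by move=> ha; apply/not_notP => /hfun_out hp; rewrite /= hp in ha.
by rewrite /p scale1r addrC subrK.
Qed.

End EffectiveDomain.

(* The weights [2 L] and [al lm] make the [t^2] terms cancel, as [lm t^2 dd <= t q]. *)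
Lemma ler_decrease_comb (R : realFieldType) (h' h0 t D q dd lm L al : R) :
  0 < lm -> 0 < L -> 0 < al -> 0 <= t <= 1 -> 0 <= dd -> lm * dd <= q ->
  h' <= h0 - al * t / 2 * q -> h' <= h0 - t * D + L * (t ^+ 2 * dd) ->
  h' <= h0 - al * lm / (al * lm + 2 * L) * t * D.
Proof.
move=> lm_gt0 L_gt0 al_gt0 /andP[t_ge0 t_le1] dd_ge0 q_ge armijo descent.
have W_gt0 : 0 < al * lm + 2 * L by rewrite addr_gt0 ?mulr_gt0.
have descent' := ler_wpM2l (ltW (mulr_gt0 al_gt0 lm_gt0)) descent.
have armijo' := ler_wpM2l (ltW (mulr_gt0 (ltr0Sn _ 1) L_gt0)) armijo.
have q_ge' : lm * (t * dd) <= q.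
  by apply: le_trans q_ge; apply: ler_wpM2l; [exact: ltW | exact: ler_piMl].
have q_ge'' := ler_wpM2l (mulr_ge0 (mulr_ge0 (ltW al_gt0) (ltW L_gt0)) t_ge0) q_ge'.
rewrite -(ler_pM2l W_gt0).
have -> : (al * lm + 2 * L) * (h0 - al * lm / (al * lm + 2 * L) * t * D) =
   (al * lm + 2 * L) * h0 - al * lm * t * D by field; rewrite gt_eqF.
rewrite expr2 in descent'; lra.
Qed.

Lemma decreasing_seq_unbounded (R : archiFieldType) (r : nat -> R) (d b : R) :
  0 < d -> (forall k, r k.+1 <= r k - d) -> exists k, r k < b.
Proof.
move=> d_gt0 r_dec.
have r_le k : r k <= r 0%N - k%:R * d.
  elim: k => [|k IH]; first by rewrite mul0r subr0.
  by have := r_dec k; rewrite -addn1 natrD mulrDl mul1r; lra.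
exists (Num.truncn ((r 0%N - b) / d)).+1; apply: le_lt_trans (r_le _) _.
have := truncnS_gt ((r 0%N - b) / d); rewrite ltr_pdivrMr // => lt; lra.
Qed.

Section OSMM.
Variables (R : realType) (n : nat).
Notation vec := 'cV[R]_n.
Variables (Omega : set vec) (f : vec -> R) (gf : vec -> vec) (L : R) (g : vec -> \bar R)
  (M : nat) (alpha beta tau_min mu_min mu_max gdec ginc C : R)
  (x xh : nat -> vec) (H : nat -> 'M[R]_n) (mu t : nat -> R) (j : nat -> nat).

Local Notation A k := (osmm_mat (mu k) tau_min (H k)).
Local Notation h := (hfun Omega f g).

Hypotheses (Omega_open : open Omega) (Omega_convex : convex_set_v Omega)
  (f_convex : convex_on Omega f)
  (f_diff : forall z, Omega z -> differentiable f z)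
  (f_grad : forall z v, Omega z -> 'd f z v = dotv (gf z) v)
  (gf_lipschitz : forall y z, Omega y -> Omega z -> enorm (gf y - gf z) <= L * enorm (y - z))
  (g_nNy : forall z, g z != -oo%E) (g_convex : convex_ext g)
  (h_compact : forall a : R, compact [set z | (h z <= a%:E)%E])
  (h_inf_lty : (ereal_inf (range h) < +oo)%E)
  (alpha01 : 0 < alpha < 1) (beta01 : 0 < beta < 1) (tau_min_gt0 : 0 < tau_min)
  (mu_min_gt0 : 0 < mu_min) (mu_min_le_max : mu_min <= mu_max)
  (gdec01 : 0 < gdec < 1) (ginc_gt1 : 1 < ginc)
  (mu0_bounds : mu_min <= mu 0%N <= mu_max)
  (H_psd : forall k v, 0 <= quadf (H k) v)
  (H_bounded : forall k v, enorm (H k *m v) <= C * enorm v)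
  (x0_in : Omega (x 0%N))
  (xh_opt : forall k z, (osmm_obj M f gf g x (A k) k (xh k) <= osmm_obj M f gf g x (A k) k z)%E)
  (t_pow : forall k, t k = beta ^+ j k)
  (t_accept : forall k, osmm_accept Omega f g alpha (A k) (x k) (xh k) (t k))
  (t_first : forall k i, (i < j k)%N ->
     ~ osmm_accept Omega f g alpha (A k) (x k) (xh k) (beta ^+ i))
  (x_next : forall k, x k.+1 = x k + t k *: (xh k - x k))
  (mu_next : forall k, mu k.+1 = if t k == 1 then Num.max (gdec * mu k) mu_min
                                 else Num.min (ginc * mu k) mu_max).

(* A positive Lipschitz constant, so that it can be divided by. *)
Local Notation L1 := (`|L| + 1).
Local Notation lmin := (mu_min * tau_min).
Local Notation lmax := (mu_max * (`|C| + tau_min)).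

Lemma L1_gt0 : 0 < L1.
Proof. by rewrite ltr_pwDr. Qed.

Lemma gf_lipschitz1 y z : Omega y -> Omega z -> enorm (gf y - gf z) <= L1 * enorm (y - z).
Proof.
move=> Oy Oz; apply: le_trans (gf_lipschitz Oy Oz) _.
by rewrite ler_wpM2r ?enorm_ge0 // (le_trans (ler_norm L)) // lerDl.
Qed.

Lemma descent_lemma1 (y d : vec) : Omega y -> Omega (y + d) ->
  `|f (y + d) - f y - dotv (gf y) d| <= L1 * dotv d d.
Proof. exact: (descent_lemma Omega_convex f_diff f_grad (ltW L1_gt0) gf_lipschitz1). Qed.

Lemma mu_bounds k : mu_min <= mu k <= mu_max.
Proof.
elim: k => // k /andP[mu_ge mu_le]; have /andP[gdec_gt0 gdec_lt1] := gdec01.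
have mu_ge0 : 0 <= mu k by apply: le_trans (ltW mu_min_gt0) mu_ge.
rewrite mu_next; case: ifP => _.
  rewrite le_max lexx orbT ge_max mu_min_le_max andbT /=.
  exact: le_trans (ler_piMl mu_ge0 (ltW gdec_lt1)) mu_le.
rewrite ge_min lexx orbT le_min mu_min_le_max !andbT.
exact: le_trans mu_ge (ler_peMl mu_ge0 (ltW ginc_gt1)).
Qed.

Lemma lambda_bounds k : lmin <= osmm_lambda (mu k) tau_min (H k) <= lmax.
Proof.
have /andP[tau_ge0 tau_le] := osmm_tau_bounds (H_psd k) (H_bounded k).
have /andP[mu_ge mu_le] := mu_bounds k.
have tau_min_ge0 := ltW tau_min_gt0; have mu_min_ge0 := ltW mu_min_gt0.
rewrite /osmm_lambda; apply/andP; split; apply: ler_pM; rewrite ?lerDr ?lerD2r //.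
- exact: le_trans mu_min_ge0 mu_ge.
- exact: addr_ge0.
Qed.

Lemma lmin_gt0 : 0 < lmin.
Proof. exact: mulr_gt0. Qed.

Lemma quadA_ge k w : lmin * dotv w w <= quadf (A k) w.
Proof.
rewrite quadfD_scalar; have := H_psd k w; have := dotvv_ge0 w.
have /andP[lam_ge _] := lambda_bounds k; nra.
Qed.

Lemma quadA_ge0 k w : 0 <= quadf (A k) w.
Proof. by apply: le_trans (quadA_ge k w); rewrite mulr_ge0 ?dotvv_ge0 ?ltW ?lmin_gt0. Qed.

Lemma quadA_le k w : quadf (A k) w <= (`|C| + lmax) * dotv w w.
Proof.
rewrite quadfD_scalar; have := quadf_le w (H_bounded k); have := dotvv_ge0 w.
have /andP[_ lam_le] := lambda_bounds k; have := ler_norm C; nra.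
Qed.

Lemma h_closed (a : R) : closed [set z | (h z <= a%:E)%E].
Proof. exact: compact_closed (@norm_hausdorff _ _) (@h_compact a). Qed.

Lemma dom_h_nonempty : exists y, Omega y /\ g y != +oo%E.
Proof.
have [_ [y _ <-] hy] := ereal_inf_lt h_inf_lty.
exists y; apply: (hfun_fin_dom g_nNy); rewrite -ltey; exact: hy.
Qed.

Lemma g_xh_fin k : g (xh k) != +oo%E.
Proof.
have [y [Oy gy]] := dom_h_nonempty.
apply/negP => /eqP gxh; have := xh_opt k y; rewrite /osmm_obj gxh addey // addye //.
by rewrite -(fineK (g_fin_num g_nNy gy)) -!EFinD leye_eq.
Qed.

Lemma xh_in k : Omega (xh k).
Proof.
have [y [Oy gy]] := dom_h_nonempty.
exact: (dom_g_sub_Omega g_nNy Omega_convex f_diff f_grad (ltW L1_gt0) gf_lipschitz1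
  g_convex Omega_open h_closed Oy gy (g_xh_fin k)).
Qed.

Lemma t_bounds k : 0 < t k <= 1.
Proof.
have /andP[beta_gt0 beta_lt1] := beta01.
by rewrite t_pow exprn_gt0 // exprn_ile1 // ltW.
Qed.

Lemma t_bounds' k : 0 <= t k <= 1.
Proof. by have /andP[t_gt0 ->] := t_bounds k; rewrite ltW. Qed.

Lemma xh_sub_in k : Omega (x k + (xh k - x k)).
Proof. by rewrite addrC subrK; exact: xh_in. Qed.

Lemma x_in k : Omega (x k).
Proof.
elim: k => // k Oxk; rewrite x_next.
exact: (convex_set_segment Omega_convex Oxk (xh_sub_in k) (t_bounds' k)).
Qed.

Lemma lmodel_le_f k z : Omega z -> lmodel M f gf x k z <= f z.
Proof.
move=> Oz; apply: bigmax_le => [|i _];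
  exact: (convex_gradient_ineq Omega_convex f_diff f_grad (ltW L1_gt0) gf_lipschitz1
            f_convex (x_in _) Oz).
Qed.

Lemma affmod_le_lmodel k z : affmod f gf x k z <= lmodel M f gf x k z.
Proof. exact: bigmax_ge_id. Qed.

Lemma lmodel_at_x k : lmodel M f gf x k (x k) = f (x k).
Proof.
apply/le_anti; rewrite (lmodel_le_f _ (x_in k)) /=.
by have := affmod_le_lmodel k (x k); rewrite /affmod subrr dotvC dotv0l addr0.
Qed.


Local Notation mval k := (lmodel M f gf x k (xh k) + fine (g (xh k))).
Local Notation qval k := (quadf (A k) (xh k - x k)).
Local Notation dval k := (dotv (xh k - x k) (xh k - x k)).
Local Notation hval k := (f (x k) + fine (g (x k))).

Lemma osmm_obj_xh k : osmm_obj M f gf g x (A k) k (xh k) = (mval k + 1 / 2 * qval k)%:E.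
Proof. by rewrite /osmm_obj -(fineK (g_fin_num g_nNy (g_xh_fin k))) -!EFinD. Qed.

Lemma osmm_obj_xh_le_h k : ((mval k + 1 / 2 * qval k)%:E <= h (x k))%E.
Proof.
have := xh_opt k (x k); rewrite osmm_obj_xh /osmm_obj subrr quadf0 mulr0 adde0.
by rewrite lmodel_at_x /hfun fext_in //; exact: x_in.
Qed.

Lemma model_gap_ge k : g (x k) != +oo%E -> mval k + 1 / 2 * qval k <= hval k.
Proof.
by move=> gx; have := osmm_obj_xh_le_h k; rewrite (hfun_fin f g_nNy (x_in k)) // lee_fin.
Qed.

Lemma osmm_obj_xh_le_segment k y s : Omega y -> g y != +oo%E -> g (x k) != +oo%E ->
  0 <= s <= 1 ->
  mval k + 1 / 2 * qval k <= s * (f y + fine (g y)) + (1 - s) * hval k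
                             + 1 / 2 * (s ^+ 2 * quadf (A k) (y - x k)).
Proof.
move=> Oy gy gx s01; set z := x k + s *: (y - x k).
have Oz : Omega z by apply: (convex_set_segment Omega_convex (x_in k) _ s01); rewrite addrC subrK.
have f_le := f_convex Oy (x_in k) s01; rewrite -add_scale_subE -/z in f_le.
have := g_convex y (x k) s01; rewrite -add_scale_subE -/z.
rewrite -(fineK (g_fin_num g_nNy gy)) -(fineK (g_fin_num g_nNy gx)) -!EFinM -EFinD.
have model_le := lmodel_le_f k Oz.
have z_sub : z - x k = s *: (y - x k) by rewrite /z addrC addKr.
have := xh_opt k z; rewrite osmm_obj_xh /osmm_obj z_sub quadfZ => obj_le g_le.
have := le_trans obj_le (leeD (leeD (lexx _) g_le) (lexx _)).
rewrite -!EFinD lee_fin; lra.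
Qed.

Lemma phi_le_descent k s : g (x k) != +oo%E -> 0 <= s <= 1 ->
  (osmm_phi Omega f g (x k) (xh k) s <=
   (hval k - s * (hval k - mval k) + L1 * (s ^+ 2 * dval k))%:E)%E.
Proof.
move=> gx s01; have /andP[s_ge0 _] := s01.
have Oxs := convex_set_segment Omega_convex (x_in k) (xh_sub_in k) s01.
rewrite /osmm_phi fext_in // -(fineK (g_fin_num g_nNy gx)).
rewrite -(fineK (g_fin_num g_nNy (g_xh_fin k))) -!EFinM -!EFinD lee_fin.
have := descent_lemma1 (x_in k) Oxs.
rewrite dotvZr dotvZl dotvZr ler_norml => /andP[_ f_le].
have := ler_wpM2l s_ge0 (affmod_le_lmodel k (xh k)); rewrite /affmod expr2; lra.
Qed.

Lemma small_step_accepted k s : g (x k) != +oo%E -> 0 < s <= 1 ->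
  L1 * s <= (1 - alpha) * lmin / 2 ->
  osmm_accept Omega f g alpha (A k) (x k) (xh k) s.
Proof.
move=> gx /andP[s_gt0 s_le1] s_small; rewrite /osmm_accept.
apply: le_trans (phi_le_descent gx _) _; first by rewrite ltW.
rewrite (hfun_fin f g_nNy (x_in k)) // -EFinB lee_fin.
have gap := model_gap_ge gx; have q_ge := quadA_ge k (xh k - x k).
have d_ge0 := dotvv_ge0 (xh k - x k); have /andP[alpha_gt0 alpha_lt1] := alpha01.
have h1 : s * (1 / 2 * qval k) <= s * (hval k - mval k).
  by apply: ler_wpM2l; [exact: ltW | lra].
have h2 : (L1 * s) * (s * dval k) <= ((1 - alpha) * lmin / 2) * (s * dval k).
  by rewrite ler_wpM2r // mulr_ge0 // ltW.
have h3 : ((1 - alpha) / 2 * s) * (lmin * dval k) <= ((1 - alpha) / 2 * s) * qval k.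
  by rewrite ler_wpM2l // mulr_ge0 ?divr_ge0 ?subr_ge0 ?ltW.
rewrite expr2; lra.
Qed.

Lemma h_next_le_phi k : (h (x k.+1) <= osmm_phi Omega f g (x k) (xh k) (t k))%E.
Proof.
rewrite /hfun /osmm_phi x_next -addeA leeD2l //.
by have := g_convex (xh k) (x k) (t_bounds' k); rewrite -add_scale_subE.
Qed.

Lemma h_next_fin k : h (x k.+1) != +oo%E.
Proof.
have [hx_eq|hx_neq] := eqVneq (h (x k)) +oo%E.
  (* from an infinite value every step is accepted, so the unit step is taken *)
  have [j0|j_gt0] := posnP (j k).
    by rewrite x_next t_pow j0 expr0 scale1r addrC subrK (hfun_fin f g_nNy (xh_in k) (g_xh_fin k)).
  case: (t_first j_gt0); rewrite /osmm_accept hx_eq expr0 -EFinN addye //.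
  exact: leey.
have [Ox gx] := hfun_fin_dom g_nNy hx_neq.
rewrite -ltey; apply: le_lt_trans (h_next_le_phi k) _.
apply: le_lt_trans (t_accept k) _.
by rewrite (hfun_fin f g_nNy Ox gx) -EFinB ltry.
Qed.

Lemma g_next_fin k : g (x k.+1) != +oo%E.
Proof. exact: (hfun_fin_dom g_nNy (h_next_fin k)).2. Qed.

Lemma h_next_real k : h (x k.+1) = (hval k.+1)%:E.
Proof. exact: (hfun_fin f g_nNy (x_in _) (g_next_fin k)). Qed.

Lemma h_nonincreasing k : (h (x k.+1) <= h (x k))%E.
Proof.
have [->|hx_neq] := eqVneq (h (x k)) +oo%E; first exact: leey.
have [Ox gx] := hfun_fin_dom g_nNy hx_neq.
apply: le_trans (h_next_le_phi k) _; apply: le_trans (t_accept k) _.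
rewrite (hfun_fin f g_nNy Ox gx) -EFinB lee_fin gerBl.
have /andP[alpha_gt0 _] := alpha01; have /andP[t_gt0 _] := t_bounds k.
by rewrite mulr_ge0 ?quadA_ge0 // divr_ge0 // mulr_ge0 // ltW.
Qed.


Local Notation c0 := ((1 - alpha) * lmin / (2 * L1)).
Local Notation tmin := (beta * Num.min 1 c0).
Local Notation kappa := (alpha * lmin / (alpha * lmin + 2 * L1)).

Lemma tmin_gt0 : 0 < tmin.
Proof.
have /andP[alpha_gt0 alpha_lt1] := alpha01; have /andP[beta_gt0 _] := beta01.
by rewrite mulr_gt0 // lt_min ltr01 divr_gt0 ?mulr_gt0 ?subr_gt0 ?lmin_gt0 ?L1_gt0.
Qed.

Lemma kappa_gt0 : 0 < kappa.
Proof.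
have /andP[alpha_gt0 _] := alpha01.
by rewrite divr_gt0 ?addr_gt0 ?mulr_gt0 ?lmin_gt0 ?L1_gt0.
Qed.

(* Backtracking stops at the latest after the first trial step below [c0]. *)
Lemma t_ge_tmin k : g (x k) != +oo%E -> tmin <= t k.
Proof.
move=> gx; have /andP[beta_gt0 beta_lt1] := beta01.
have min_le1 : Num.min 1 c0 <= 1 by rewrite ge_min lexx.
have [j0|j_gt0] := posnP (j k).
  rewrite t_pow j0 expr0; apply: le_trans (ler_wpM2l (ltW beta_gt0) min_le1) _.
  by rewrite mulr1 ltW.
have c0_lt : c0 < beta ^+ (j k).-1.
  rewrite ltNge; apply/negP => le_c0.
  apply: (t_first (_ : ((j k).-1 < j k)%N)); first by rewrite ltn_predL.
  apply: small_step_accepted => //; first by rewrite exprn_gt0 // exprn_ile1 // ltW.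
  have -> : (1 - alpha) * lmin / 2 = L1 * c0 by field; rewrite gt_eqF ?L1_gt0.
  by apply: ler_wpM2l le_c0; rewrite ltW ?L1_gt0.
rewrite t_pow -(prednK j_gt0) exprS; apply: ler_wpM2l; first exact: ltW.
by apply: le_trans (ltW c0_lt); rewrite ge_min lexx orbT.
Qed.

Lemma sufficient_decrease k : g (x k) != +oo%E ->
  hval k.+1 <= hval k - kappa * tmin * (hval k - mval k).
Proof.
move=> gx; have /andP[alpha_gt0 _] := alpha01.
have armijo : hval k.+1 <= hval k - alpha * t k / 2 * qval k.
  have := le_trans (h_next_le_phi k) (t_accept k).
  by rewrite h_next_real (hfun_fin f g_nNy (x_in k) gx) -EFinB lee_fin.
have descent : hval k.+1 <= hval k - t k * (hval k - mval k) + L1 * (t k ^+ 2 * dval k).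
  have := le_trans (h_next_le_phi k) (phi_le_descent gx (t_bounds' k)).
  by rewrite h_next_real lee_fin.
apply: le_trans (ler_decrease_comb lmin_gt0 L1_gt0 alpha_gt0 (t_bounds' k)
  (dotvv_ge0 _) (quadA_ge k _) armijo descent) _.
rewrite lerD2l lerN2; apply: ler_wpM2r.
  by have := model_gap_ge gx; have := quadA_ge0 k (xh k - x k); lra.
by apply: ler_wpM2l; [exact: ltW kappa_gt0 | exact: t_ge_tmin].
Qed.

Lemma iterates_bounded : exists B, forall k, dotv (x k.+1) (x k.+1) <= B.
Proof.
have [B B_ge] := compact_dotvv_bounded (@h_compact (hval 1%N)).
exists B => k; apply: B_ge; rewrite /= -h_next_real.
elim: k => // k IH; exact: le_trans (h_nonincreasing _) IH.
Qed.

Lemma model_gap_ge_segment k y s : Omega y -> g y != +oo%E -> 0 <= s <= 1 ->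
  s * (hval k.+1 - (f y + fine (g y))) - s ^+ 2 / 2 * quadf (A k.+1) (y - x k.+1)
    <= hval k.+1 - mval k.+1.
Proof.
move=> Oy gy s01; have := osmm_obj_xh_le_segment Oy gy (g_next_fin k) s01.
have := quadA_ge0 k.+1 (xh k.+1 - x k.+1); lra.
Qed.

Lemma iterates_approach y e : Omega y -> g y != +oo%E -> 0 < e ->
  exists k, (h (x k) <= (f y + fine (g y) + e)%:E)%E.
Proof.
move=> Oy gy e_gt0; apply: contrapT => /forallNP above.
have hval_gt k : f y + fine (g y) + e < hval k.+1.
  by have := above k.+1; rewrite h_next_real lee_fin => /negP; rewrite -ltNge.
have [B B_ge] := iterates_bounded.
set Q := (`|C| + lmax) * (2 * dotv y y + 2 * B).
have C_lmax_ge0 : 0 <= `|C| + lmax.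
  have mu_max_ge0 : 0 <= mu_max := le_trans (ltW mu_min_gt0) mu_min_le_max.
  by rewrite addr_ge0 // mulr_ge0 // addr_ge0 // ltW.
have Q_ge k : quadf (A k.+1) (y - x k.+1) <= Q.
  apply: le_trans (quadA_le _ _) (ler_wpM2l C_lmax_ge0 _).
  by apply: le_trans (dotvvB_le _ _) _; rewrite lerD2l ler_pM2l //; exact: B_ge.
have [s /andP[s_gt0 s_le1] sQ] := exists_small_step Q e_gt0.
have s01 : 0 <= s <= 1 by rewrite ltW.
have gap_ge k : s * e / 2 <= hval k.+1 - mval k.+1.
  apply: le_trans (model_gap_ge_segment k Oy gy s01).
  have := ler_wpM2l (ltW s_gt0) (ltW (hval_gt k)).
  have := ler_wpM2l (ltW s_gt0) sQ.
  have := ler_wpM2l (sqr_ge0 s) (Q_ge k); rewrite !expr2; lra.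
set d := kappa * tmin * (s * e / 2).
have d_gt0 : 0 < d.
  exact: mulr_gt0 (mulr_gt0 kappa_gt0 tmin_gt0) (divr_gt0 (mulr_gt0 s_gt0 e_gt0) _).
have [k lt_k] : exists k, hval k.+1 < f y + fine (g y) + e.
  apply: (@decreasing_seq_unbounded _ (fun k => hval k.+1) _ _ d_gt0) => k.
  apply: le_trans (sufficient_decrease (g_next_fin k)) _.
  rewrite lerD2l lerN2; apply: ler_wpM2l (gap_ge k).
  exact: mulr_ge0 (ltW kappa_gt0) (ltW tmin_gt0).
by have := hval_gt k; lra.
Qed.

Lemma osmm_hfun_cvg : (fun k => h (x k)) @ \oo --> ereal_inf (range h).
Proof.
have h_noninc : nonincreasing_seq (fun k => h (x k)).
  by apply/nonincreasing_seqP => k; exact: h_nonincreasing.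
suff <- : ereal_inf (range (fun k => h (x k))) = ereal_inf (range h).
  exact: ereal_nonincreasing_cvgn.
apply/le_anti/andP; split; last first.
  by apply: ereal_inf_le_tmp => _ [k _ <-]; exists (x k).
apply: le_ereal_inf_tmp => _ [z _ <-].
have [->|hz_neq] := eqVneq (h z) +oo%E; first exact: leey.
have [Oz gz] := hfun_fin_dom g_nNy hz_neq.
rewrite (hfun_fin f g_nNy Oz gz); apply/lee_addgt0Pr => e e_gt0.
have [k hk] := iterates_approach Oz gz e_gt0.
by rewrite -EFinD; apply: le_trans hk; apply: ereal_inf_lbound; exists k.
Qed.

End OSMM.

Unset Implicit Arguments.

Theorem mainTheorem3 (R : realType) (n : nat)
  (Omega : set 'cV[R]_n) (f : 'cV[R]_n -> R) (gf : 'cV[R]_n -> 'cV[R]_n) (L : R)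
  (g : 'cV[R]_n -> \bar R)
  (M : nat) (alpha beta tau_min mu_min mu_max gdec ginc mu0 C : R)
  (x xh : nat -> 'cV[R]_n) (H : nat -> 'M[R]_n) (mu t : nat -> R) (j : nat -> nat) :
  (* assumptions on Omega, f, g, h *)
  open Omega -> convex_set_v Omega -> convex_on Omega f ->
  (forall z, Omega z -> differentiable f z) ->
  (forall z v, Omega z -> 'd f z v = dotv (gf z) v) ->
  (forall y z, Omega y -> Omega z -> enorm (gf y - gf z) <= L * enorm (y - z)) ->
  (forall z, g z != -oo%E) -> convex_ext g ->
  (forall a : R, closed [set z | (g z <= a%:E)%E]) ->
  (forall a : R, compact [set z | (hfun Omega f g z <= a%:E)%E]) ->
  (ereal_inf (range (hfun Omega f g)) < +oo)%E ->
  (* parameters *)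
  (1 <= M)%N -> 0 < alpha < 1 -> 0 < beta < 1 -> 0 < tau_min ->
  0 < mu_min -> mu_min <= mu_max -> 0 < gdec < 1 -> 1 < ginc ->
  mu_min <= mu0 <= mu_max ->
  mu_max * tau_min > 2 * L / (1 - alpha) ->
  (* the matrices H_k *)
  (forall k, (H k)^T = H k /\ (forall v, 0 <= quadf (H k) v) /\
             (forall v, enorm (H k *m v) <= C * enorm v)) ->
  (* the run of the method *)
  Omega (x 0%N) -> mu 0%N = mu0 ->
  (forall k z, (osmm_obj M f gf g x (osmm_mat (mu k) tau_min (H k)) k (xh k)
                 <= osmm_obj M f gf g x (osmm_mat (mu k) tau_min (H k)) k z)%E) ->
  (forall k, t k = beta ^+ j k /\
     osmm_accept Omega f g alpha (osmm_mat (mu k) tau_min (H k)) (x k) (xh k) (t k) /\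
     (forall i, (i < j k)%N ->
        ~ osmm_accept Omega f g alpha (osmm_mat (mu k) tau_min (H k)) (x k) (xh k) (beta ^+ i))) ->
  (forall k, x k.+1 = x k + t k *: (xh k - x k)) ->
  (forall k, mu k.+1 = if t k == 1 then Num.max (gdec * mu k) mu_min
                       else Num.min (ginc * mu k) mu_max) ->
  (fun k => hfun Omega f g (x k)) @ \oo --> ereal_inf (range (hfun Omega f g)).
Proof.
move=> Omega_open Omega_convex f_convex f_diff f_grad gf_lipschitz g_nNy g_convex _ h_compact
  h_inf_lty _ alpha01 beta01 tau_min_gt0 mu_min_gt0 mu_min_le_max gdec01 ginc_gt1 mu0_bounds _
  H_props x0_in mu0_def xh_opt step_props x_next mu_next.
(* [lambda_k >= mu_min tau_min] alone bounds the steps from below. *)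
apply: (osmm_hfun_cvg Omega_open Omega_convex f_convex f_diff f_grad gf_lipschitz g_nNy g_convex
  h_compact h_inf_lty alpha01 beta01 tau_min_gt0 mu_min_gt0 mu_min_le_max gdec01 ginc_gt1 _
  (fun k => (H_props k).2.1) (fun k => (H_props k).2.2) x0_in xh_opt
  (fun k => (step_props k).1) (fun k => (step_props k).2.1) (fun k => (step_props k).2.2)
  x_next mu_next).
by rewrite mu0_def.
Qed.
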